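(* Let $f\colon\mathbb{R}^2\to\mathbb{R}$, $f(x_1,x_3)=\frac14(x_3^2-1)$. There is a smooth family of functions $f_t^\delta\colon[-2,2]\times[-2,2]\to\mathbb{R}$, parametrised by $\delta\in(0,\frac1{10}]$ and $t\in[-1,1]$, with the following properties: (1) $f_{-1}^\delta=f$; (2) $f_t^\delta$ is independent of $t$ outside the square $[-1-2\delta,1+2\delta]\times[-1-2\delta,1+2\delta]$; (3) for $t<0$ the zero-set of $f_t^\delta$ consists of two arcs, homotopic to those of $f$ (namely the segments $\{x_3=1\}$ and $\{x_3=-1\}$); for $t=0$ the zero-set is a letter X (two arcs crossing transversally at a single point); and for $t>0$ it again consists of two arcs, connecting the endpoints the other way; moreover the vanishing is of order exactly $1$, except at the singular point when $t=0$, where it is quadratic; (4) $f_t^\delta$ is bounded in $C^1$, uniformly in $t$ and $\delta$. *)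

From Stdlib Require Import Reals List.
From Coquelicot Require Import Coquelicot.
Open Scope R_scope.

Definition f0 (x1 x3 : R) : R := / 4 * (x3 ^ 2 - 1).

Definition in_box (a x1 x3 : R) : Prop := -a <= x1 <= a /\ -a <= x3 <= a.

Definition partial3 (i : nat) (g : R -> R -> R -> R) : R -> R -> R -> R :=
  fun a b c =>
    match i with
    | O => Derive (fun s => g s b c) a
    | S O => Derive (fun s => g a s c) b
    | _ => Derive (fun s => g a b s) c
    end.

Fixpoint iter_partial3 (l : list nat) (g : R -> R -> R -> R) : R -> R -> R -> R :=
  match l with
  | nil => g
  | i :: l' => partial3 i (iter_partial3 l' g)
  end.

Definition cont3 (g : R -> R -> R -> R) : Prop :=
  forall a b c eps, 0 < eps -> exists d, 0 < d /\
    forall a' b' c', Rabs (a' - a) < d -> Rabs (b' - b) < d -> Rabs (c' - c) < d ->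
      Rabs (g a' b' c' - g a b c) < eps.

Definition smooth3 (g : R -> R -> R -> R) : Prop :=
  forall l : list nat,
    cont3 (iter_partial3 l g) /\
    forall a b c,
      ex_derive (fun s => iter_partial3 l g s b c) a /\
      ex_derive (fun s => iter_partial3 l g a s c) b /\
      ex_derive (fun s => iter_partial3 l g a b s) c.

Definition dx1 (g : R -> R -> R) (x1 x3 : R) : R := Derive (fun y => g y x3) x1.
Definition dx3 (g : R -> R -> R) (x1 x3 : R) : R := Derive (fun y => g x1 y) x3.

Definition order_one_at (g : R -> R -> R) (p : R * R) : Prop :=
  (dx1 g (fst p) (snd p), dx3 g (fst p) (snd p)) <> (0, 0).

Definition quadratic_at (g : R -> R -> R) (p : R * R) : Prop :=
  dx1 g (fst p) (snd p) = 0 /\ dx3 g (fst p) (snd p) = 0 /\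
  ~ (dx1 (dx1 g) (fst p) (snd p) = 0 /\ dx3 (dx1 g) (fst p) (snd p) = 0 /\
     dx1 (dx3 g) (fst p) (snd p) = 0 /\ dx3 (dx3 g) (fst p) (snd p) = 0).

Definition is_arc (gam : R -> R * R) : Prop :=
  (forall s, 0 <= s <= 1 ->
     continuous (fun r => fst (gam r)) s /\ continuous (fun r => snd (gam r)) s) /\
  (forall s s', 0 <= s <= 1 -> 0 <= s' <= 1 -> gam s = gam s' -> s = s').

Definition on_arc (gam : R -> R * R) (p : R * R) : Prop :=
  exists s, 0 <= s <= 1 /\ gam s = p.

Definition zero_set (g : R -> R -> R) (p : R * R) : Prop :=
  in_box 2 (fst p) (snd p) /\ g (fst p) (snd p) = 0.

Definition two_disjoint_arcs (Z : R * R -> Prop) (a1 b1 a2 b2 : R * R) : Prop :=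
  exists g1 g2 : R -> R * R,
    is_arc g1 /\ is_arc g2 /\
    g1 0 = a1 /\ g1 1 = b1 /\ g2 0 = a2 /\ g2 1 = b2 /\
    (forall p, ~ (on_arc g1 p /\ on_arc g2 p)) /\
    (forall p, Z p <-> on_arc g1 p \/ on_arc g2 p).

(** The set Z is a letter X: two arcs (from a1 to b1 and from a2 to b2)
    meeting in exactly one point c, interior to both, where both are
    differentiable with linearly independent velocity vectors
    (transversal crossing). *)
Definition letter_X (Z : R * R -> Prop) (a1 b1 a2 b2 c : R * R) : Prop :=
  exists (g1 g2 : R -> R * R) (s1 s2 : R),
    is_arc g1 /\ is_arc g2 /\
    g1 0 = a1 /\ g1 1 = b1 /\ g2 0 = a2 /\ g2 1 = b2 /\
    0 < s1 < 1 /\ 0 < s2 < 1 /\ g1 s1 = c /\ g2 s2 = c /\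
    (forall p, on_arc g1 p -> on_arc g2 p -> p = c) /\
    ex_derive (fun r => fst (g1 r)) s1 /\ ex_derive (fun r => snd (g1 r)) s1 /\
    ex_derive (fun r => fst (g2 r)) s2 /\ ex_derive (fun r => snd (g2 r)) s2 /\
    Derive (fun r => fst (g1 r)) s1 * Derive (fun r => snd (g2 r)) s2
      - Derive (fun r => snd (g1 r)) s1 * Derive (fun r => fst (g2 r)) s2 <> 0 /\
    (forall p, Z p <-> on_arc g1 p \/ on_arc g2 p).

(* The family ft delta t is obtained from the flat function exp (-1/x) by arithmetic, which
   makes it jointly smooth in (t, x1, x3).  Inside the strip |x3| <= 1 + delta it is the
   model w (x3^2 - level t x1) with a weight w > 0, where level t x1 = 1 - depth t * bump x1
   is pushed down by a dent around x1 = 0; outside |x3| <= 1 + 2 delta it is f itself, and a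
   cutoff in x3 interpolates between the two.  The zero set is therefore {x3^2 = level}.
   The dent has depth 1 + t for t >= 0 and is shallower before, so for t < 0 the level stays
   positive and the zero set is the pair of graphs x3 = +-sqrt level; at t = 0 the level is
   the perfect square (1 - 2 ramp x1)^2, whose two square roots cross transversally at the
   origin; for t > 0 the level is negative exactly on an interval (xL, -xL), and the zero set
   consists of a left and a right fold.
   The weight equals delta wherever the dent is present, so the x3-derivative of the cutoff,
   of size 1/delta, only ever multiplies quantities of size O(delta): this is what makes the
   C^1 bound uniform in delta. *)

From Stdlib Require Import Reals List Lra FunctionalExtensionality.
From Coquelicot Require Import Coquelicot.
Open Scope R_scope.

Lemma pow2_eq_iff y a : y ^ 2 = a ^ 2 <-> y = a \/ y = - a.
Proof.
  split; [rewrite <- !Rsqr_pow2; apply Rsqr_eq|intros [-> | ->]; ring].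
Qed.

Lemma Rabs_mult_le a b A B : Rabs a <= A -> Rabs b <= B -> Rabs (a * b) <= A * B.
Proof. intros. rewrite Rabs_mult. apply Rmult_le_compat; auto using Rabs_pos. Qed.

Lemma Rabs_plus_le a b A B : Rabs a <= A -> Rabs b <= B -> Rabs (a + b) <= A + B.
Proof. intros. eapply Rle_trans; [apply Rabs_triang|lra]. Qed.

Lemma Rabs_unit a : 0 <= a <= 1 -> Rabs a <= 1.
Proof. intros. rewrite Rabs_pos_eq; lra. Qed.

Lemma affine_continuous a b s : continuous (fun r => a + b * r) s.
Proof. apply (ex_derive_continuous (fun r => a + b * r)). auto_derive. exact I. Qed.

Lemma continuous_dominated (f g : R -> R) s0 :
  (forall s, Rabs (f s - f s0) <= Rabs (g s - g s0)) -> continuous g s0 -> continuous f s0.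
Proof.
  intros Hdom Hg. apply continuity_pt_filterlim. apply continuity_pt_filterlim in Hg.
  unfold continuity_pt, continue_in, limit1_in, limit_in in *. simpl in *.
  intros eps Heps. destruct (Hg eps Heps) as [a [Ha Hx]]. exists a; split; auto.
  intros x Hx'. specialize (Hx x Hx'). unfold R_dist in *. specialize (Hdom x). simpl in *. lra.
Qed.

(** * The flat function *)

Inductive is_poly : (R -> R) -> Prop :=
| is_poly_const c : is_poly (fun _ => c)
| is_poly_id : is_poly (fun y => y)
| is_poly_plus P Q : is_poly P -> is_poly Q -> is_poly (fun y => P y + Q y)
| is_poly_mult P Q : is_poly P -> is_poly Q -> is_poly (fun y => P y * Q y).

Lemma is_poly_derive P : is_poly P -> exists P', is_poly P' /\ forall y, is_derive P y (P' y).
Proof.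
  induction 1 as [c| |P Q _ [P' [HP' DP]] _ [Q' [HQ' DQ]]|P Q HP [P' [HP' DP]] HQ [Q' [HQ' DQ]]].
  - exists (fun _ => 0); split; [constructor|]. intros y; exact (is_derive_const c y).
  - exists (fun _ => 1); split; [constructor|]. intros y; exact (is_derive_id y).
  - exists (fun y => P' y + Q' y); split; [constructor; auto|].
    intros y; apply (is_derive_plus P Q); auto.
  - exists (fun y => P' y * Q y + P y * Q' y); split; [repeat constructor; auto|].
    intros y; apply (is_derive_mult P Q); auto. exact Rmult_comm.
Qed.

Lemma is_poly_exp_bounded P : is_poly P ->
  forall a, 0 < a -> exists C, forall y, 0 <= y -> Rabs (P y) * exp (- (a * y)) <= C.
Proof.
  induction 1 as [c| |P Q _ IHP _ IHQ|P Q _ IHP _ IHQ]; intros a Ha.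
  - exists (Rabs c); intros y Hy.
    assert (exp (- (a * y)) <= 1).
    { rewrite exp_Ropp, <- Rinv_1. apply Rinv_le_contravar; [lra|].
      pose proof (exp_ineq1_le (a * y)); nra. }
    pose proof (Rabs_pos c); nra.
  - exists (/ a); intros y Hy.
    assert (Hexp : a * y <= exp (a * y)) by (pose proof (exp_ineq1_le (a * y)); lra).
    rewrite Rabs_pos_eq, exp_Ropp by lra.
    pose proof (exp_pos (a * y)).
    apply (Rmult_le_reg_l (a * exp (a * y))); [nra|].
    field_simplify; lra.
  - destruct (IHP a Ha) as [C1 B1], (IHQ a Ha) as [C2 B2].
    exists (C1 + C2); intros y Hy.
    pose proof (Rabs_triang (P y) (Q y)). pose proof (exp_pos (- (a * y))).
    specialize (B1 y Hy); specialize (B2 y Hy). nra.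
  - destruct (IHP (a / 2) ltac:(lra)) as [C1 B1], (IHQ (a / 2) ltac:(lra)) as [C2 B2].
    exists (C1 * C2); intros y Hy.
    specialize (B1 y Hy); specialize (B2 y Hy).
    replace (Rabs (P y * Q y) * exp (- (a * y)))
      with ((Rabs (P y) * exp (- (a / 2 * y))) * (Rabs (Q y) * exp (- (a / 2 * y)))).
    2:{ replace (- (a * y)) with (- (a / 2 * y) + - (a / 2 * y)) by field.
        rewrite Rabs_mult, exp_plus. ring. }
    apply Rmult_le_compat; auto; apply Rmult_le_pos; auto using Rabs_pos, Rlt_le, exp_pos.
Qed.

Lemma is_derive_of_quadratic_bound f x C :
  (forall y, Rabs (f y - f x) <= C * (y - x) ^ 2) -> is_derive f x 0.
Proof.
  intros Hf.
  assert (HC : 0 <= C).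
  { specialize (Hf (x + 1)). pose proof (Rabs_pos (f (x + 1) - f x)).
    replace ((x + 1 - x) ^ 2) with 1 in Hf by ring. lra. }
  apply is_derive_Reals. intros eps Heps.
  assert (Hdelta : 0 < eps / (C + 1)) by (apply Rdiv_lt_0_compat; lra).
  exists (mkposreal _ Hdelta). intros h Hh0 Hh. simpl in Hh.
  specialize (Hf (x + h)). replace (x + h - x) with h in Hf by ring.
  assert (Habs : 0 < Rabs h) by (apply Rabs_pos_lt; auto).
  rewrite Rminus_0_r. unfold Rdiv. rewrite Rabs_mult, Rabs_inv.
  apply (Rmult_lt_reg_r (Rabs h)); auto.
  rewrite Rmult_assoc, Rinv_l by lra.
  rewrite <- pow2_abs in Hf.
  assert (C * Rabs h < eps).
  { apply (Rmult_lt_reg_r (/ (C + 1))); [apply Rinv_0_lt_compat; lra|].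
    assert (C / (C + 1) < 1) by (apply (Rmult_lt_reg_r (C + 1)); [lra|]; field_simplify; lra).
    unfold Rdiv in Hh. nra. }
  nra.
Qed.

Definition flat_of (P : R -> R) (x : R) : R :=
  if Rlt_dec 0 x then P (/ x) * exp (- / x) else 0.

Lemma flat_of_quadratic_bound P : is_poly P -> exists C, forall h, Rabs (flat_of P h) <= C * h ^ 2.
Proof.
  intros HP.
  assert (HQ : is_poly (fun y => y * y * P y)) by (repeat constructor; auto).
  (* for h > 0, flat_of P h = h ^ 2 * Q (1 / h) * exp (- 1 / h) with Q y = y ^ 2 * P y *)
  destruct (is_poly_exp_bounded _ HQ 1 ltac:(lra)) as [C HC].
  exists C; intros h. unfold flat_of. destruct (Rlt_dec 0 h) as [Hh|Hh].
  - specialize (HC (/ h) (Rlt_le _ _ (Rinv_0_lt_compat _ Hh))).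
    rewrite Rmult_1_l, !Rabs_mult, Rabs_pos_eq in HC by (apply Rlt_le, Rinv_0_lt_compat; auto).
    rewrite Rabs_mult, (Rabs_pos_eq (exp _)) by (apply Rlt_le, exp_pos).
    replace (Rabs (P (/ h)) * exp (- / h))
      with (h ^ 2 * (/ h * / h * Rabs (P (/ h)) * exp (- / h))) by (field; lra).
    rewrite Rmult_comm. apply Rmult_le_compat_r; [apply pow2_ge_0|exact HC].
  - assert (0 <= C).
    { eapply Rle_trans; [|apply (HC 0); lra].
      apply Rmult_le_pos; [apply Rabs_pos|apply Rlt_le, exp_pos]. }
    rewrite Rabs_R0. apply Rmult_le_pos; [auto|apply pow2_ge_0].
Qed.

Lemma flat_of_derive P : is_poly P ->
  exists P', is_poly P' /\ forall x, is_derive (flat_of P) x (flat_of P' x).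
Proof.
  intros HP. destruct (is_poly_derive P HP) as [P' [HP' DP]].
  (* d/dx [P (1/x) e^(-1/x)] = (1/x)^2 (P - P') (1/x) e^(-1/x) *)
  exists (fun y => y * y * (P y + -1 * P' y)). split; [repeat constructor; auto|].
  intros x. destruct (Rtotal_order x 0) as [Hx|[->|Hx]].
  - apply (is_derive_ext_loc (fun _ => 0)).
    + apply (locally_interval _ x m_infty 0); simpl; auto.
      intros y _ Hy. unfold flat_of. destruct (Rlt_dec 0 y); [lra|reflexivity].
    + unfold flat_of. destruct (Rlt_dec 0 x); [lra|]. exact (is_derive_const 0 x).
  - unfold flat_of at 2. destruct (Rlt_dec 0 0); [lra|].
    destruct (flat_of_quadratic_bound P HP) as [C HC].
    apply (is_derive_of_quadratic_bound _ _ C). intros y.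
    unfold flat_of at 2. destruct (Rlt_dec 0 0); [lra|].
    rewrite !Rminus_0_r. apply HC.
  - apply (is_derive_ext_loc (fun z => P (/ z) * exp (- / z))).
    + apply (locally_interval _ x 0 p_infty); simpl; auto.
      intros y Hy _. unfold flat_of. destruct (Rlt_dec 0 y); [reflexivity|lra].
    + unfold flat_of. destruct (Rlt_dec 0 x); [|lra].
      auto_derive.
      * repeat split; try lra. exists (P' (/ x)). apply DP.
      * replace (Derive (fun y : R => P y) (/ x)) with (P' (/ x))
          by (symmetry; apply is_derive_unique, DP).
        field. lra.
Qed.

Definition flat : R -> R := flat_of (fun _ => 1).

Definition smooth1 (phi : R -> R) : Prop := forall k x, ex_derive (Derive_n phi k) x.

Lemma Derive_n_flat k : exists P, is_poly P /\ forall x, Derive_n flat k x = flat_of P x.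
Proof.
  induction k as [|k [P [HP E]]].
  - exists (fun _ => 1). split; [constructor|reflexivity].
  - destruct (flat_of_derive P HP) as [P' [HP' D]].
    exists P'. split; auto. intros x. simpl.
    rewrite (Derive_ext _ _ x E). apply is_derive_unique, D.
Qed.

Lemma flat_smooth1 : smooth1 flat.
Proof.
  intros k x. destruct (Derive_n_flat k) as [P [HP E]].
  destruct (flat_of_derive P HP) as [P' [_ D]].
  exists (flat_of P' x). apply (is_derive_ext (flat_of P)); auto.
Qed.

Lemma flat_pos x : 0 < x -> flat x = exp (- / x).
Proof. intros Hx. unfold flat, flat_of. destruct (Rlt_dec 0 x); [ring|lra]. Qed.

Lemma flat_nonpos x : x <= 0 -> flat x = 0.
Proof. intros Hx. unfold flat, flat_of. destruct (Rlt_dec 0 x); [lra|reflexivity]. Qed.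

Lemma flat_ge0 x : 0 <= flat x.
Proof.
  destruct (Rlt_dec 0 x).
  - rewrite flat_pos by auto. apply Rlt_le, exp_pos.
  - rewrite flat_nonpos; lra.
Qed.

(** * Smooth functions of three variables *)

Inductive smooth_fun3 : (R -> R -> R -> R) -> Prop :=
| sf_const c : smooth_fun3 (fun _ _ _ => c)
| sf_var1 : smooth_fun3 (fun a _ _ => a)
| sf_var2 : smooth_fun3 (fun _ b _ => b)
| sf_var3 : smooth_fun3 (fun _ _ c => c)
| sf_plus f g : smooth_fun3 f -> smooth_fun3 g -> smooth_fun3 (fun a b c => f a b c + g a b c)
| sf_mult f g : smooth_fun3 f -> smooth_fun3 g -> smooth_fun3 (fun a b c => f a b c * g a b c)
| sf_inv f : smooth_fun3 f -> (forall a b c, f a b c <> 0) ->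
    smooth_fun3 (fun a b c => / f a b c)
| sf_comp phi k f : smooth1 phi -> smooth_fun3 f ->
    smooth_fun3 (fun a b c => Derive_n phi k (f a b c)).

Lemma sf_ext f g : smooth_fun3 f -> (forall a b c, f a b c = g a b c) -> smooth_fun3 g.
Proof.
  intros Hf E.
  replace g with f; auto.
  do 3 (apply functional_extensionality; intro). apply E.
Qed.

Lemma sf_opp f : smooth_fun3 f -> smooth_fun3 (fun a b c => - f a b c).
Proof.
  intros Hf. apply (sf_ext (fun a b c => -1 * f a b c)); [|intros; ring].
  apply sf_mult; [apply sf_const|auto].
Qed.

Lemma sf_minus f g : smooth_fun3 f -> smooth_fun3 g -> smooth_fun3 (fun a b c => f a b c - g a b c).
Proof. intros; apply sf_plus, sf_opp; auto. Qed.

Lemma sf_pow f n : smooth_fun3 f -> smooth_fun3 (fun a b c => f a b c ^ n).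
Proof. intros Hf. induction n as [|n IH]; [exact (sf_const 1)|exact (sf_mult _ _ Hf IH)]. Qed.

Lemma sf_div f g : smooth_fun3 f -> smooth_fun3 g -> (forall a b c, g a b c <> 0) ->
  smooth_fun3 (fun a b c => f a b c / g a b c).
Proof. intros; apply sf_mult, sf_inv; auto. Qed.

Lemma sf_comp0 phi f : smooth1 phi -> smooth_fun3 f -> smooth_fun3 (fun a b c => phi (f a b c)).
Proof. exact (fun H => sf_comp phi 0 f H). Qed.

Definition partials3 (g g1 g2 g3 : R -> R -> R -> R) : Prop :=
  forall a b c,
    is_derive (fun s => g s b c) a (g1 a b c) /\
    is_derive (fun s => g a s c) b (g2 a b c) /\
    is_derive (fun s => g a b s) c (g3 a b c).

Lemma partials3_plus f g f1 f2 f3 g1 g2 g3 :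
  partials3 f f1 f2 f3 -> partials3 g g1 g2 g3 ->
  partials3 (fun a b c => f a b c + g a b c) (fun a b c => f1 a b c + g1 a b c)
    (fun a b c => f2 a b c + g2 a b c) (fun a b c => f3 a b c + g3 a b c).
Proof.
  intros Df Dg a b c.
  destruct (Df a b c) as [Df1 [Df2 Df3]], (Dg a b c) as [Dg1 [Dg2 Dg3]].
  exact (conj (is_derive_plus _ _ _ _ _ Df1 Dg1)
           (conj (is_derive_plus _ _ _ _ _ Df2 Dg2) (is_derive_plus _ _ _ _ _ Df3 Dg3))).
Qed.

Lemma partials3_mult f g f1 f2 f3 g1 g2 g3 :
  partials3 f f1 f2 f3 -> partials3 g g1 g2 g3 ->
  partials3 (fun a b c => f a b c * g a b c)
    (fun a b c => f1 a b c * g a b c + f a b c * g1 a b c)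
    (fun a b c => f2 a b c * g a b c + f a b c * g2 a b c)
    (fun a b c => f3 a b c * g a b c + f a b c * g3 a b c).
Proof.
  intros Df Dg a b c.
  destruct (Df a b c) as [Df1 [Df2 Df3]], (Dg a b c) as [Dg1 [Dg2 Dg3]].
  exact (conj (is_derive_mult _ _ _ _ _ Df1 Dg1 Rmult_comm)
           (conj (is_derive_mult _ _ _ _ _ Df2 Dg2 Rmult_comm)
              (is_derive_mult _ _ _ _ _ Df3 Dg3 Rmult_comm))).
Qed.

Lemma partials3_inv f f1 f2 f3 : partials3 f f1 f2 f3 -> (forall a b c, f a b c <> 0) ->
  partials3 (fun a b c => / f a b c) (fun a b c => - f1 a b c / f a b c ^ 2)
    (fun a b c => - f2 a b c / f a b c ^ 2) (fun a b c => - f3 a b c / f a b c ^ 2).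
Proof.
  intros Df Hf0 a b c. destruct (Df a b c) as [Df1 [Df2 Df3]].
  exact (conj (is_derive_inv _ _ _ Df1 (Hf0 a b c))
           (conj (is_derive_inv _ _ _ Df2 (Hf0 a b c)) (is_derive_inv _ _ _ Df3 (Hf0 a b c)))).
Qed.

Lemma partials3_comp phi k f f1 f2 f3 : smooth1 phi -> partials3 f f1 f2 f3 ->
  partials3 (fun a b c => Derive_n phi k (f a b c))
    (fun a b c => f1 a b c * Derive_n phi (S k) (f a b c))
    (fun a b c => f2 a b c * Derive_n phi (S k) (f a b c))
    (fun a b c => f3 a b c * Derive_n phi (S k) (f a b c)).
Proof.
  intros Hphi Df a b c. destruct (Df a b c) as [Df1 [Df2 Df3]].
  pose proof (fun y => Derive_correct _ _ (Hphi k y)) as Dphi.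
  exact (conj (is_derive_comp _ _ _ _ _ (Dphi _) Df1)
           (conj (is_derive_comp _ _ _ _ _ (Dphi _) Df2) (is_derive_comp _ _ _ _ _ (Dphi _) Df3))).
Qed.

Lemma smooth_fun3_partials g : smooth_fun3 g ->
  exists g1 g2 g3, smooth_fun3 g1 /\ smooth_fun3 g2 /\ smooth_fun3 g3 /\ partials3 g g1 g2 g3.
Proof.
  induction 1 as [c0| | | |f g _ [f1 [f2 [f3 [S1 [S2 [S3 Df]]]]]] _ [g1 [g2 [g3 [T1 [T2 [T3 Dg]]]]]]
    |f g Sf [f1 [f2 [f3 [S1 [S2 [S3 Df]]]]]] Sg [g1 [g2 [g3 [T1 [T2 [T3 Dg]]]]]]
    |f Sf [f1 [f2 [f3 [S1 [S2 [S3 Df]]]]]] Hf0|phi k f Hphi Sf [f1 [f2 [f3 [S1 [S2 [S3 Df]]]]]]].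
  - exists (fun _ _ _ => 0), (fun _ _ _ => 0), (fun _ _ _ => 0).
    do 3 (split; [apply sf_const|]). intros a b c.
    exact (conj (is_derive_const c0 a) (conj (is_derive_const c0 b) (is_derive_const c0 c))).
  - exists (fun _ _ _ => 1), (fun _ _ _ => 0), (fun _ _ _ => 0).
    do 3 (split; [apply sf_const|]). intros a b c.
    exact (conj (is_derive_id a) (conj (is_derive_const a b) (is_derive_const a c))).
  - exists (fun _ _ _ => 0), (fun _ _ _ => 1), (fun _ _ _ => 0).
    do 3 (split; [apply sf_const|]). intros a b c.
    exact (conj (is_derive_const b a) (conj (is_derive_id b) (is_derive_const b c))).
  - exists (fun _ _ _ => 0), (fun _ _ _ => 0), (fun _ _ _ => 1).
    do 3 (split; [apply sf_const|]). intros a b c.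
    exact (conj (is_derive_const c a) (conj (is_derive_const c b) (is_derive_id c))).
  - do 3 eexists. refine (conj _ (conj _ (conj _ (partials3_plus _ _ _ _ _ _ _ _ Df Dg))));
      apply sf_plus; auto.
  - do 3 eexists. refine (conj _ (conj _ (conj _ (partials3_mult _ _ _ _ _ _ _ _ Df Dg))));
      apply sf_plus; apply sf_mult; auto.
  - do 3 eexists. refine (conj _ (conj _ (conj _ (partials3_inv _ _ _ _ Df Hf0))));
      (apply sf_div; [apply sf_opp|apply sf_pow|intros; apply pow_nonzero]; auto).
  - do 3 eexists. refine (conj _ (conj _ (conj _ (partials3_comp _ k _ _ _ _ Hphi Df))));
      (apply sf_mult; [|apply sf_comp]; auto).
Qed.

Definition uncurry3 (g : R -> R -> R -> R) (p : R * R * R) : R :=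
  g (fst (fst p)) (snd (fst p)) (snd p).

Lemma smooth_fun3_continuous g : smooth_fun3 g -> forall p, continuous (uncurry3 g) p.
Proof.
  unfold uncurry3.
  induction 1 as [c| | | |f g _ IHf _ IHg|f g _ IHf _ IHg|f _ IHf Hf0|phi k f Hphi _ IHf]; intros p.
  - apply continuous_const.
  - apply (continuous_comp fst fst); apply continuous_fst.
  - apply (continuous_comp fst snd); [apply continuous_fst|apply continuous_snd].
  - apply continuous_snd.
  - apply (continuous_plus (fun p => f _ _ _) (fun p => g _ _ _)); auto.
  - apply (continuous_mult (fun p => f _ _ _) (fun p => g _ _ _)); auto.
  - apply (continuous_comp _ Rinv); auto. apply continuous_Rinv, Hf0.
  - apply (continuous_comp _ (Derive_n phi k)); [apply IHf|].
    exact (ex_derive_continuous (Derive_n phi k) _ (Hphi k _)).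
Qed.

Lemma cont3_of_continuous g : (forall p, continuous (uncurry3 g) p) -> cont3 g.
Proof.
  intros Hg a b c eps Heps.
  destruct (Hg (a, b, c) _ (locally_ball (g a b c) (mkposreal eps Heps))) as [delta Hdelta].
  exists delta; split; [apply cond_pos|].
  intros a' b' c' Ha Hb Hc. apply (Hdelta (a', b', c')).
  repeat split; assumption.
Qed.

Lemma smooth_fun3_continuous_slice g b c a : smooth_fun3 g -> continuous (fun s => g s b c) a.
Proof.
  intros Hg P HP.
  destruct (smooth_fun3_continuous g Hg (a, b, c) P HP) as [eps He].
  exists eps. intros y Hy. apply (He (y, b, c)).
  repeat split; simpl; auto; apply ball_center.
Qed.

Lemma smooth_fun3_slice_C1 g b c a : smooth_fun3 g ->
  ex_derive (fun s => g s b c) a /\ continuous (Derive (fun s => g s b c)) a.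
Proof.
  intros Hg. destruct (smooth_fun3_partials g Hg) as [g1 [g2 [g3 [S1 [_ [_ D]]]]]].
  split; [exists (g1 a b c); apply D|].
  apply (continuous_ext (fun s => g1 s b c)).
  - intros s. symmetry. apply is_derive_unique, D.
  - apply smooth_fun3_continuous_slice, S1.
Qed.

Lemma smooth_fun3_smooth3 g : smooth_fun3 g -> smooth3 g.
Proof.
  intros Hg l.
  assert (Hl : smooth_fun3 (iter_partial3 l g)).
  { induction l as [|i l IH]; simpl; auto.
    destruct (smooth_fun3_partials _ IH) as [g1 [g2 [g3 [S1 [S2 [S3 D]]]]]].
    destruct i as [|[|i]]; [apply (sf_ext g1)|apply (sf_ext g2)|apply (sf_ext g3)]; auto;
      intros a b c; destruct (D a b c) as [D1 [D2 D3]]; symmetry; apply is_derive_unique; auto. }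
  split.
  - apply cont3_of_continuous, smooth_fun3_continuous, Hl.
  - destruct (smooth_fun3_partials _ Hl) as [g1 [g2 [g3 [_ [_ [_ D]]]]]].
    intros a b c. destruct (D a b c) as [D1 [D2 D3]].
    split; [|split]; eexists; eassumption.
Qed.

(** * The smooth step *)

Definition step (x : R) : R := flat x / (flat x + flat (1 - x)).

Lemma flat_sum_pos x : 0 < flat x + flat (1 - x).
Proof.
  pose proof (flat_ge0 x). pose proof (flat_ge0 (1 - x)).
  destruct (Rlt_dec 0 x).
  - rewrite (flat_pos x) in * by auto. pose proof (exp_pos (- / x)). lra.
  - rewrite (flat_pos (1 - x)) in * by lra. pose proof (exp_pos (- / (1 - x))). lra.
Qed.

Lemma sf_step f : smooth_fun3 f -> smooth_fun3 (fun a b c => step (f a b c)).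
Proof.
  intros Hf. unfold step. apply sf_div.
  - apply sf_comp0; [apply flat_smooth1|auto].
  - apply sf_plus; apply sf_comp0; try apply flat_smooth1; auto.
    apply sf_minus; [apply sf_const|auto].
  - intros a b c. apply Rgt_not_eq, flat_sum_pos.
Qed.

Lemma step_C1 x : ex_derive step x /\ continuous (Derive step) x.
Proof. exact (smooth_fun3_slice_C1 (fun a _ _ => step a) 0 0 x (sf_step _ sf_var1)). Qed.

Lemma step_derivable x : ex_derive step x.
Proof. apply step_C1. Qed.

Ltac fold_step' := change (Derive (fun z : R => step z)) with (Derive step).

Lemma step_nonpos x : x <= 0 -> step x = 0.
Proof. intros Hx. unfold step. rewrite flat_nonpos by auto. unfold Rdiv. ring. Qed.

Lemma step_ge1 x : 1 <= x -> step x = 1.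
Proof.
  intros Hx. unfold step. rewrite (flat_nonpos (1 - x)) by lra.
  pose proof (flat_sum_pos x) as Hs. rewrite (flat_nonpos (1 - x)) in Hs by lra.
  field. lra.
Qed.

Lemma step_range x : 0 <= step x <= 1.
Proof.
  unfold step. pose proof (flat_sum_pos x). pose proof (flat_ge0 x). pose proof (flat_ge0 (1 - x)).
  split.
  - apply Rdiv_le_0_compat; auto.
  - apply (Rmult_le_reg_r (flat x + flat (1 - x))); auto.
    field_simplify; lra.
Qed.

Lemma step_sym x : step (1 - x) = 1 - step x.
Proof.
  unfold step. replace (1 - (1 - x)) with x by ring.
  pose proof (flat_sum_pos x). field. lra.
Qed.

Lemma step_half : step (/ 2) = / 2.
Proof. pose proof (step_sym (/ 2)) as E. replace (1 - / 2) with (/ 2) in E by field. lra. Qed.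

Lemma step_derive_pos x : 0 < x < 1 -> 0 < Derive step x.
Proof.
  intros Hx.
  set (A := exp (- / x)). set (B := exp (- / (1 - x))).
  assert (HA : 0 < A) by apply exp_pos. assert (HB : 0 < B) by apply exp_pos.
  assert (D : is_derive (fun z => exp (- / z) / (exp (- / z) + exp (- / (1 - z)))) x
                (A * B * (/ x ^ 2 + / (1 - x) ^ 2) / (A + B) ^ 2)).
  { auto_derive.
    - fold A. replace (1 + - x) with (1 - x) by ring. fold B. repeat split; lra.
    - fold A. replace (1 + - x) with (1 - x) by ring. fold B. field. lra. }
  rewrite (is_derive_unique step x (A * B * (/ x ^ 2 + / (1 - x) ^ 2) / (A + B) ^ 2)).
  - apply Rdiv_lt_0_compat; [|apply pow_lt; lra].
    apply Rmult_lt_0_compat; [nra|].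
    apply Rplus_lt_0_compat; apply Rinv_0_lt_compat, pow_lt; lra.
  - apply (is_derive_ext_loc (fun z => exp (- / z) / (exp (- / z) + exp (- / (1 - z))))); auto.
    apply (locally_interval _ x 0 1); simpl; try lra.
    intros y Hy0 Hy1. unfold step. rewrite !flat_pos by (simpl in *; lra). reflexivity.
Qed.

Lemma step_lt x y : 0 <= x -> x < y -> y <= 1 -> step x < step y.
Proof.
  intros Hx Hxy Hy.
  assert (pr : derivable step) by (intros z; apply ex_derive_Reals_0, step_derivable).
  apply (derive_increasing_interv 0 1 step pr); try lra.
  intros z Hz. rewrite Derive_Reals. apply step_derive_pos, Hz.
Qed.

Lemma step_le x y : x <= y -> step x <= step y.
Proof.
  intros Hxy.
  pose proof (step_range x). pose proof (step_range y).
  destruct (Rle_dec x 0); [rewrite (step_nonpos x); lra|].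
  destruct (Rle_dec 1 y); [rewrite (step_ge1 y); lra|].
  destruct (Req_dec x y) as [->|]; [lra|].
  left. apply step_lt; lra.
Qed.

Lemma step_derive_out x : x < 0 \/ 1 < x -> Derive step x = 0.
Proof.
  intros Hx. apply is_derive_unique.
  destruct Hx as [Hx|Hx].
  - apply (is_derive_ext_loc (fun _ => 0)); [|exact (is_derive_const 0 x)].
    apply (locally_interval _ x m_infty 0); simpl; auto.
    intros y _ Hy. symmetry. apply step_nonpos. simpl in Hy; lra.
  - apply (is_derive_ext_loc (fun _ => 1)); [|exact (is_derive_const 1 x)].
    apply (locally_interval _ x 1 p_infty); simpl; auto.
    intros y Hy _. symmetry. apply step_ge1. simpl in Hy; lra.
Qed.

Lemma step_derive_bounded : exists K, forall x, Rabs (Derive step x) <= K.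
Proof.
  destruct (continuity_ab_maj (fun x => Rabs (Derive step x)) 0 1) as [xM [HM _]]; [lra| |].
  - intros x _. apply continuity_pt_filterlim.
    apply (continuous_comp (Derive step) Rabs); [apply step_C1|apply continuous_Rabs].
  - exists (Rabs (Derive step xM)). intros x. destruct (Rle_dec 0 x); [destruct (Rle_dec x 1)|].
    + apply HM; lra.
    + rewrite step_derive_out, Rabs_R0 by lra. apply Rabs_pos.
    + rewrite step_derive_out, Rabs_R0 by lra. apply Rabs_pos.
Qed.

(** * Arcs *)

Definition graph_arc (phi : R -> R) (s : R) : R * R := (-2 + 4 * s, phi (-2 + 4 * s)).

Lemma graph_arc_is_arc phi : (forall x, continuous phi x) -> is_arc (graph_arc phi).
Proof.
  intros Hphi. split.
  - intros s _. split; [apply affine_continuous|].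
    apply (continuous_comp (fun r => -2 + 4 * r) phi); [apply affine_continuous|apply Hphi].
  - intros s s' _ _ E. injection E as E _. lra.
Qed.

Lemma on_graph_arc phi x y : on_arc (graph_arc phi) (x, y) <-> -2 <= x <= 2 /\ y = phi x.
Proof.
  split.
  - intros [s [Hs E]]. injection E as <- <-. split; [lra|reflexivity].
  - intros [Hx ->]. exists ((x + 2) / 4). split; [lra|].
    unfold graph_arc. replace (-2 + 4 * ((x + 2) / 4)) with x by field. reflexivity.
Qed.

Lemma graph_arc_0 phi : graph_arc phi 0 = (-2, phi (-2)).
Proof. unfold graph_arc. f_equal; [|f_equal]; ring. Qed.

Lemma graph_arc_1 phi : graph_arc phi 1 = (2, phi 2).
Proof. unfold graph_arc. f_equal; [|f_equal]; ring. Qed.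

Lemma graph_arc_half phi : graph_arc phi (/ 2) = (0, phi 0).
Proof. unfold graph_arc. replace (-2 + 4 * / 2) with 0 by field. reflexivity. Qed.

Lemma graph_arc_derive phi s dphi : is_derive phi (-2 + 4 * s) dphi ->
  ex_derive (fun r => fst (graph_arc phi r)) s /\ ex_derive (fun r => snd (graph_arc phi r)) s /\
  Derive (fun r => fst (graph_arc phi r)) s = 4 /\
  Derive (fun r => snd (graph_arc phi r)) s = 4 * dphi.
Proof.
  intros D. unfold graph_arc. simpl.
  assert (Dx : is_derive (fun r => -2 + 4 * r) s 4) by (auto_derive; [exact I|ring]).
  assert (Dy : is_derive (fun r => phi (-2 + 4 * r)) s (4 * dphi))
    by exact (is_derive_comp phi (fun r => -2 + 4 * r) s dphi 4 D Dx).
  split; [eexists; exact Dx|]. split; [eexists; exact Dy|].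
  split; apply is_derive_unique; assumption.
Qed.

Definition mirror (g : R -> R * R) (s : R) : R * R := (- fst (g s), snd (g s)).

Lemma mirror_is_arc g : is_arc g -> is_arc (mirror g).
Proof.
  intros [Hc Hi]. split.
  - intros s Hs. destruct (Hc s Hs). split; auto.
    apply (continuous_opp (fun r => fst (g r))); auto.
  - intros s s' Hs Hs' E. unfold mirror in E. injection E as E1 E2.
    apply Hi; auto. apply injective_projections; lra.
Qed.

Lemma on_mirror g x y : on_arc (mirror g) (x, y) <-> on_arc g (- x, y).
Proof.
  split; intros [s [Hs E]]; exists s; split; auto.
  - unfold mirror in E. injection E as E1 E2.
    apply injective_projections; simpl; lra.
  - unfold mirror. rewrite E. simpl. f_equal. ring.
Qed.

Section FoldedArc.

Variable L : R -> R.
Variable x0 : R.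
Hypothesis L_continuous : forall x, continuous L x.
Hypothesis x0_gt : -2 < x0.
Hypothesis L_x0 : L x0 = 0.
Hypothesis L_pos : forall x, -2 <= x < x0 -> 0 < L x.

(* The folded arc runs from (-2, sqrt (L (-2))) along y = sqrt (L x) to the turning point
   (x0, 0), reached at s = 1/2, and back to x = -2 along y = - sqrt (L x). *)
Definition fold_x (s : R) : R := x0 - (x0 + 2) * Rabs (2 * s - 1).

Definition fold_y (s : R) : R :=
  if Rle_dec s (/ 2) then sqrt (L (fold_x s)) else - sqrt (L (fold_x s)).

Definition folded_arc (s : R) : R * R := (fold_x s, fold_y s).

Lemma fold_x_continuous s : continuous fold_x s.
Proof.
  apply (continuous_plus (fun _ => x0) (fun r => - ((x0 + 2) * Rabs (2 * r - 1)))).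
  - apply continuous_const.
  - apply (continuous_opp (fun r => (x0 + 2) * Rabs (2 * r - 1))).
    apply (continuous_mult (fun _ => x0 + 2) (fun r => Rabs (2 * r - 1)));
      [apply continuous_const|].
    apply continuous_Rabs_comp.
    apply (continuous_ext (fun r : R => -1 + 2 * r) (fun r : R => 2 * r - 1));
      [intros r; simpl; ring|apply affine_continuous].
Qed.

Lemma fold_x_le s : fold_x s <= x0.
Proof. unfold fold_x. pose proof (Rabs_pos (2 * s - 1)). nra. Qed.

Lemma fold_x_lt s : s <> / 2 -> fold_x s < x0.
Proof.
  intros Hs. unfold fold_x. assert (0 < Rabs (2 * s - 1)) by (apply Rabs_pos_lt; lra). nra.
Qed.

Lemma fold_x_ge s : 0 <= s <= 1 -> -2 <= fold_x s.
Proof.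
  intros Hs. unfold fold_x. assert (Rabs (2 * s - 1) <= 1) by (apply Rabs_le_between; lra). nra.
Qed.

Lemma fold_x_half : fold_x (/ 2) = x0.
Proof. unfold fold_x. replace (2 * / 2 - 1) with 0 by field. rewrite Rabs_R0. ring. Qed.

Lemma L_fold_nonneg s : 0 <= s <= 1 -> 0 <= L (fold_x s).
Proof.
  intros Hs. destruct (Req_dec s (/ 2)) as [->|Hs2].
  - rewrite fold_x_half, L_x0. lra.
  - apply Rlt_le, L_pos. split; [apply fold_x_ge, Hs|apply fold_x_lt, Hs2].
Qed.

Lemma sqrt_L_fold_continuous s : continuous (fun r => sqrt (L (fold_x r))) s.
Proof.
  apply continuous_sqrt_comp, (continuous_comp fold_x L);
    [apply fold_x_continuous|apply L_continuous].
Qed.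

Lemma fold_y_continuous s : continuous fold_y s.
Proof.
  destruct (Rtotal_order s (/ 2)) as [Hs|[->|Hs]].
  - apply (continuous_ext_loc _ (fun r => sqrt (L (fold_x r)))); [|apply sqrt_L_fold_continuous].
    apply (locally_interval _ s m_infty (/ 2)); simpl; auto.
    intros r _ Hr. unfold fold_y. destruct (Rle_dec r (/ 2)); [reflexivity|simpl in Hr; lra].
  - apply (continuous_dominated _ (fun r => sqrt (L (fold_x r)))); [|apply sqrt_L_fold_continuous].
    intros r. unfold fold_y. rewrite fold_x_half, L_x0, sqrt_0.
    destruct (Rle_dec (/ 2) (/ 2)); [|lra].
    destruct (Rle_dec r (/ 2)); rewrite ?Rabs_Ropp, !Rminus_0_r, ?Rabs_Ropp; lra.
  - apply (continuous_ext_loc _ (fun r => - sqrt (L (fold_x r)))).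
    + apply (locally_interval _ s (/ 2) p_infty); simpl; auto.
      intros r Hr _. unfold fold_y. destruct (Rle_dec r (/ 2)); [simpl in Hr; lra|reflexivity].
    + apply (continuous_opp (fun r => sqrt (L (fold_x r)))), sqrt_L_fold_continuous.
Qed.

Lemma folded_arc_injective s s' : 0 <= s <= 1 -> 0 <= s' <= 1 ->
  fold_x s = fold_x s' -> fold_y s = fold_y s' -> s = s'.
Proof.
  intros Hs Hs' Ex Ey.
  assert (Ea : Rabs (2 * s - 1) = Rabs (2 * s' - 1)).
  { unfold fold_x in Ex. apply (Rmult_eq_reg_l (x0 + 2)); lra. }
  destruct (Req_dec s s') as [|Hne]; auto. exfalso.
  assert (Hopp : 2 * s - 1 = - (2 * s' - 1)).
  { destruct (Rcase_abs (2 * s - 1)) as [A|A]; destruct (Rcase_abs (2 * s' - 1)) as [B|B];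
      rewrite ?(Rabs_left _ A), ?(Rabs_right _ A), ?(Rabs_left _ B), ?(Rabs_right _ B) in Ea;
      first [lra|exfalso; apply Hne; lra]. }
  assert (Hs2 : s <> / 2) by lra.
  pose proof (sqrt_lt_R0 _ (L_pos (fold_x s) (conj (fold_x_ge s Hs) (fold_x_lt s Hs2)))).
  unfold fold_y in Ey. rewrite <- Ex in Ey.
  destruct (Rle_dec s (/ 2)); destruct (Rle_dec s' (/ 2)); lra.
Qed.

Lemma folded_arc_is_arc : is_arc folded_arc.
Proof.
  split.
  - intros s _. split; [apply fold_x_continuous|apply fold_y_continuous].
  - intros s s' Hs Hs' E. injection E as Ex Ey. apply folded_arc_injective; auto.
Qed.

Lemma folded_arc_0 : folded_arc 0 = (-2, sqrt (L (-2))).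
Proof.
  unfold folded_arc, fold_y. replace (fold_x 0) with (-2).
  - destruct (Rle_dec 0 (/ 2)); [reflexivity|lra].
  - unfold fold_x. rewrite Rabs_left by lra. ring.
Qed.

Lemma folded_arc_1 : folded_arc 1 = (-2, - sqrt (L (-2))).
Proof.
  unfold folded_arc, fold_y. replace (fold_x 1) with (-2).
  - destruct (Rle_dec 1 (/ 2)); [lra|reflexivity].
  - unfold fold_x. rewrite Rabs_pos_eq by lra. ring.
Qed.

Lemma on_folded_arc x y : on_arc folded_arc (x, y) <-> -2 <= x <= x0 /\ y ^ 2 = L x.
Proof.
  split.
  - intros [s [Hs E]]. injection E as <- <-.
    split; [split; [apply fold_x_ge, Hs|apply fold_x_le]|].
    unfold fold_y. destruct (Rle_dec s (/ 2));
      [|replace ((- sqrt (L (fold_x s))) ^ 2) with (sqrt (L (fold_x s)) ^ 2) by ring];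
      apply pow2_sqrt, L_fold_nonneg, Hs.
  - intros [Hx Hy].
    set (r := (x0 - x) / (x0 + 2)).
    assert (Hr : 0 <= r <= 1).
    { unfold r. split; [apply Rdiv_le_0_compat; lra|].
      apply (Rmult_le_reg_r (x0 + 2)); [lra|]. field_simplify; lra. }
    assert (Hfold : forall s, Rabs (2 * s - 1) = r -> fold_x s = x).
    { intros s Hs. unfold fold_x. rewrite Hs. unfold r. field. lra. }
    destruct (Rle_dec 0 y) as [Hy0|Hy0].
    + exists ((1 - r) / 2). split; [lra|].
      unfold folded_arc, fold_y.
      rewrite Hfold by (rewrite Rabs_left1; lra).
      destruct (Rle_dec ((1 - r) / 2) (/ 2)); [|lra].
      rewrite <- Hy, sqrt_pow2 by lra. reflexivity.
    + assert (Hr0 : 0 < r).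
      { destruct (Req_dec r 0) as [E|]; [|lra]. exfalso.
        assert (x = x0) by (unfold r in E; apply (Rmult_eq_reg_r (/ (x0 + 2)));
          [lra|apply Rinv_neq_0_compat; lra]).
        subst x. rewrite L_x0 in Hy. nra. }
      exists ((1 + r) / 2). split; [lra|].
      unfold folded_arc, fold_y.
      rewrite Hfold by (rewrite Rabs_pos_eq; lra).
      destruct (Rle_dec ((1 + r) / 2) (/ 2)); [lra|].
      replace (y ^ 2) with ((- y) ^ 2) in Hy by ring.
      rewrite <- Hy, sqrt_pow2 by lra. f_equal. ring.
Qed.

End FoldedArc.

(** * Ingredients of the family *)

(* The weight is switched on while t runs through [-1, -1/2]; then the dent deepens, and
   the topology of the zero set changes when its depth reaches 1, at t = 0. *)
Definition onset (t : R) : R := step (2 + 2 * t).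
Definition depth (t : R) : R := step (1 + 2 * t) * (1 + t).
Definition plateau (x : R) : R := step (2 + 2 * x) * step (2 - 2 * x).
Definition ramp (x : R) : R := step (/ 2 + x).
Definition bump (x : R) : R := 4 * (ramp x * (1 - ramp x)).
Definition level (t x : R) : R := 1 - depth t * bump x.
Definition weight (d t x : R) : R := / 4 - (/ 4 - d) * (onset t * plateau x).
Definition cutoff (d y : R) : R := step ((1 + 2 * d - y) / d) * step ((1 + 2 * d + y) / d).
Definition model (d t x y : R) : R := weight d t x * (y ^ 2 - level t x).
Definition ft (d t x y : R) : R := cutoff d y * model d t x y + (1 - cutoff d y) * f0 x y.

Ltac smooth_fun3_tac :=
  repeat first [ apply sf_const | apply sf_var1 | apply sf_var2 | apply sf_var3
               | apply sf_step | apply sf_plus | apply sf_mult | apply sf_opp | apply sf_pow ].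

Lemma ft_smooth d : smooth3 (ft d).
Proof.
  apply smooth_fun3_smooth3.
  unfold ft, model, level, weight, cutoff, onset, depth, plateau, bump, ramp, f0, Rdiv, Rminus.
  smooth_fun3_tac.
Qed.

Lemma ramp_opp x : ramp (- x) = 1 - ramp x.
Proof. unfold ramp. rewrite <- step_sym. f_equal. field. Qed.

Lemma ramp_zero : ramp 0 = / 2.
Proof. unfold ramp. rewrite Rplus_0_r. apply step_half. Qed.

Lemma ramp_m2 : ramp (-2) = 0.
Proof. apply step_nonpos. lra. Qed.

Lemma ramp_2 : ramp 2 = 1.
Proof. apply step_ge1. lra. Qed.

Lemma ramp_lt_half x : x < 0 -> ramp x < / 2.
Proof.
  intros Hx. rewrite <- ramp_zero. unfold ramp.
  destruct (Rle_dec (/ 2 + x) 0) as [H|H].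
  - rewrite step_nonpos by auto. rewrite Rplus_0_r, step_half. lra.
  - apply step_lt; lra.
Qed.

Lemma ramp_half_iff x : ramp x = / 2 <-> x = 0.
Proof.
  split; [|intros ->; apply ramp_zero].
  intros E. destruct (Rtotal_order x 0) as [Hx|[Hx|Hx]]; auto.
  - pose proof (ramp_lt_half x Hx). lra.
  - pose proof (ramp_lt_half (- x) ltac:(lra)). rewrite ramp_opp in H. lra.
Qed.

Lemma ramp_derive x : is_derive ramp x (Derive step (/ 2 + x)).
Proof.
  unfold ramp. auto_derive; [apply step_derivable|]. fold_step'. ring.
Qed.

Definition cross_branch (x : R) : R := 1 - 2 * ramp x.

Lemma cross_branch_derive x : is_derive cross_branch x (-2 * Derive step (/ 2 + x)).
Proof.
  unfold cross_branch. pose proof (ramp_derive x) as D.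
  auto_derive; [eexists; exact D|].
  replace (Derive (fun z : R => ramp z) x) with (Derive step (/ 2 + x))
    by (symmetry; apply is_derive_unique, D).
  ring.
Qed.

Lemma cross_branch_continuous x : continuous cross_branch x.
Proof. apply (ex_derive_continuous cross_branch). eexists. apply cross_branch_derive. Qed.

Lemma cross_branch_eq0 x : cross_branch x = 0 <-> x = 0.
Proof. unfold cross_branch. rewrite <- (ramp_half_iff x). split; intros; lra. Qed.

Lemma onset_range t : 0 <= onset t <= 1.
Proof. apply step_range. Qed.

Lemma plateau_range x : 0 <= plateau x <= 1.
Proof.
  unfold plateau. pose proof (step_range (2 + 2 * x)). pose proof (step_range (2 - 2 * x)).
  split; nra.
Qed.

Lemma plateau_far x : 1 <= Rabs x -> plateau x = 0.
Proof.
  intros Hx. unfold plateau. destruct (Rle_dec 0 x).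
  - rewrite Rabs_pos_eq in Hx by lra. rewrite (step_nonpos (2 - 2 * x)) by lra. ring.
  - rewrite Rabs_left in Hx by lra. rewrite (step_nonpos (2 + 2 * x)) by lra. ring.
Qed.

Lemma bump_range x : 0 <= bump x <= 1.
Proof.
  unfold bump. pose proof (step_range (/ 2 + x)) as Hr. fold (ramp x) in Hr.
  pose proof (pow2_ge_0 (2 * ramp x - 1)). split; nra.
Qed.

Lemma bump_opp x : bump (- x) = bump x.
Proof. unfold bump. rewrite ramp_opp. ring. Qed.

Lemma bump_far x : / 2 <= Rabs x -> bump x = 0.
Proof.
  intros Hx. unfold bump, ramp. destruct (Rle_dec 0 x).
  - rewrite Rabs_pos_eq in Hx by lra. rewrite step_ge1 by lra. ring.
  - rewrite Rabs_left in Hx by lra. rewrite step_nonpos by lra. ring.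
Qed.

Lemma bump_zero : bump 0 = 1.
Proof. unfold bump. rewrite ramp_zero. field. Qed.

Lemma bump_lt x y : - / 2 <= x -> x < y -> y <= 0 -> bump x < bump y.
Proof.
  intros Hx Hxy Hy0. unfold bump.
  assert (Hlt : ramp x < ramp y) by (unfold ramp; apply step_lt; lra).
  assert (Hy : ramp y <= / 2) by (rewrite <- ramp_zero; unfold ramp; apply step_le; lra).
  pose proof (step_range (/ 2 + x)). fold (ramp x) in H. nra.
Qed.

Lemma depth_range t : -1 <= t <= 1 -> 0 <= depth t <= 2.
Proof. intros Ht. unfold depth. pose proof (step_range (1 + 2 * t)). split; nra. Qed.

Lemma depth_lt1 t : -1 <= t < 0 -> depth t < 1.
Proof. intros Ht. unfold depth. pose proof (step_range (1 + 2 * t)). nra. Qed.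

Lemma depth_nonneg_time t : 0 <= t -> depth t = 1 + t.
Proof. intros Ht. unfold depth. rewrite step_ge1 by lra. ring. Qed.

Lemma depth_bump_support t x : depth t * bump x <> 0 -> - / 2 < t /\ Rabs x < / 2.
Proof.
  intros H. split.
  - destruct (Rlt_dec (- / 2) t); auto.
    exfalso. apply H. unfold depth. rewrite step_nonpos by lra. ring.
  - destruct (Rlt_dec (Rabs x) (/ 2)); auto.
    exfalso. apply H. rewrite bump_far by lra. ring.
Qed.

Lemma level_continuous t x : continuous (level t) x.
Proof.
  apply (smooth_fun3_continuous_slice (fun a _ _ => level t a) 0 0 x).
  unfold level, depth, bump, ramp, Rminus. smooth_fun3_tac.
Qed.

Lemma level_le1 t x : -1 <= t <= 1 -> level t x <= 1.
Proof. intros Ht. unfold level. pose proof (depth_range t Ht). pose proof (bump_range x). nra. Qed.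

Lemma level_far t x : / 2 <= Rabs x -> level t x = 1.
Proof. intros Hx. unfold level. rewrite bump_far by auto. ring. Qed.

Lemma level_m2 t : level t (-2) = 1.
Proof. apply level_far. rewrite Rabs_left; lra. Qed.

Lemma level_2 t : level t 2 = 1.
Proof. apply level_far. rewrite Rabs_pos_eq; lra. Qed.

Lemma level_opp t x : level t (- x) = level t x.
Proof. unfold level. rewrite bump_opp. reflexivity. Qed.

Lemma level_zero_time x : level 0 x = cross_branch x ^ 2.
Proof. unfold level, bump, cross_branch. rewrite depth_nonneg_time by lra. ring. Qed.

Lemma level_lt t x y : 0 < t -> - / 2 <= x -> x < y -> y <= 0 -> level t y < level t x.
Proof.
  intros Ht Hx Hxy Hy0. unfold level. rewrite depth_nonneg_time by lra.
  pose proof (bump_lt x y Hx Hxy Hy0). nra.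
Qed.

Lemma level_pos_negative_time t x : -1 <= t < 0 -> 0 < level t x.
Proof.
  intros Ht. unfold level. pose proof (depth_lt1 t Ht). pose proof (depth_range t ltac:(lra)).
  pose proof (bump_range x). nra.
Qed.

Lemma level_root t : 0 < t <= 1 -> exists xL, - / 2 < xL < 0 /\ level t xL = 0 /\
  (forall x, x < xL -> 0 < level t x) /\ (forall x, xL < x < - xL -> level t x < 0).
Proof.
  intros Ht.
  assert (Hleft : level t (- / 2) = 1) by (apply level_far; rewrite Rabs_left; lra).
  assert (Hmid : level t 0 = - t).
  { unfold level. rewrite bump_zero, depth_nonneg_time by lra. ring. }
  assert (Hcont : continuity (fun x => - level t x)).
  { intros x. apply continuity_pt_filterlim, (continuous_opp (level t)), level_continuous. }
  destruct (IVT _ (- / 2) 0 Hcont) as [xL [HxL E]]; try lra.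
  assert (HxL' : - / 2 < xL < 0).
  { split; [destruct (Req_dec xL (- / 2))|destruct (Req_dec xL 0)]; subst; try lra. }
  exists xL. split; [auto|split; [lra|split]].
  - intros x Hx. destruct (Rle_dec x (- / 2)).
    + rewrite level_far by (rewrite Rabs_left; lra). lra.
    + pose proof (level_lt t x xL ltac:(lra) ltac:(lra) ltac:(lra) ltac:(lra)). lra.
  - intros x Hx.
    assert (Hneg : forall z, xL < z <= 0 -> level t z < 0).
    { intros z Hz. destruct (Req_dec z 0) as [->|Hz0]; [lra|].
      pose proof (level_lt t xL z ltac:(lra) ltac:(lra) ltac:(lra) ltac:(lra)). lra. }
    destruct (Rle_dec x 0); [apply Hneg; lra|].
    rewrite <- level_opp. apply Hneg. lra.
Qed.

Lemma weight_inner d t x : - / 2 <= t -> Rabs x <= / 2 -> weight d t x = d.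
Proof.
  intros Ht Hx. apply Rabs_le_between in Hx.
  unfold weight, onset, plateau. rewrite !step_ge1 by lra. ring.
Qed.

Definition plateau' (x : R) : R := 2 * Derive step (2 + 2 * x) * step (2 - 2 * x)
                         - 2 * step (2 + 2 * x) * Derive step (2 - 2 * x).

Definition bump' (x : R) : R := 4 * Derive step (/ 2 + x) * (1 - 2 * ramp x).

Definition cutoff' (d y : R) : R :=
  - / d * Derive step ((1 + 2 * d - y) / d) * step ((1 + 2 * d + y) / d)
  + step ((1 + 2 * d - y) / d) * (/ d * Derive step ((1 + 2 * d + y) / d)).

Lemma plateau_derive x : is_derive plateau x (plateau' x).
Proof.
  unfold plateau, plateau', Rminus. auto_derive.
  - repeat split; apply step_derivable.
  - fold_step'. ring.
Qed.

Lemma bump_derive x : is_derive bump x (bump' x).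
Proof.
  unfold bump, bump', ramp. auto_derive.
  - repeat split; apply step_derivable.
  - fold_step'. ring.
Qed.

Lemma cutoff_derive d y : 0 < d -> is_derive (cutoff d) y (cutoff' d y).
Proof.
  intros Hd. unfold cutoff, cutoff', Rdiv, Rminus. auto_derive.
  - repeat split; apply step_derivable.
  - fold_step'. ring.
Qed.

Lemma plateau'_inner x : Rabs x < / 2 -> plateau' x = 0.
Proof.
  intros Hx. apply Rabs_lt_between in Hx. unfold plateau'.
  rewrite !step_derive_out by (right; lra). ring.
Qed.

Lemma cutoff'_zero d y : 0 < d -> Rabs y < 1 + d \/ 1 + 2 * d < Rabs y -> cutoff' d y = 0.
Proof.
  intros Hd [Hy|Hy]; unfold cutoff'.
  - apply Rabs_lt_between in Hy.
    rewrite !step_derive_out; [ring| |]; right;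
      apply (Rmult_lt_reg_l d); try lra; field_simplify; lra.
  - destruct (Rle_dec 0 y).
    + rewrite Rabs_pos_eq in Hy by lra.
      assert ((1 + 2 * d - y) / d < 0) by (apply (Rmult_lt_reg_l d); try lra; field_simplify; lra).
      rewrite (step_derive_out ((1 + 2 * d - y) / d)) by (left; lra).
      rewrite (step_nonpos ((1 + 2 * d - y) / d)) by lra. ring.
    + rewrite Rabs_left in Hy by lra.
      assert ((1 + 2 * d + y) / d < 0) by (apply (Rmult_lt_reg_l d); try lra; field_simplify; lra).
      rewrite (step_derive_out ((1 + 2 * d + y) / d)) by (left; lra).
      rewrite (step_nonpos ((1 + 2 * d + y) / d)) by lra. ring.
Qed.

Lemma ft_dx1 d t x y : dx1 (ft d t) x y =
  cutoff d y * (- (/ 4 - d) * onset t * plateau' x * (y ^ 2 - level t x)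
                + weight d t x * depth t * bump' x).
Proof.
  unfold dx1. apply is_derive_unique.
  unfold ft, model, level, weight, f0. auto_derive.
  - split; [exists (plateau' x); apply plateau_derive|].
    split; [exists (bump' x); apply bump_derive|]. exact I.
  - replace (Derive (fun z : R => plateau z) x) with (plateau' x)
      by (symmetry; apply is_derive_unique, plateau_derive).
    replace (Derive (fun z : R => bump z) x) with (bump' x)
      by (symmetry; apply is_derive_unique, bump_derive).
    ring.
Qed.

Lemma ft_dx3 d t x y : 0 < d -> dx3 (ft d t) x y =
  cutoff' d y * (model d t x y - f0 x y) + cutoff d y * (2 * y * weight d t x)
  + (1 - cutoff d y) * (y / 2).
Proof.
  intros Hd. unfold dx3. apply is_derive_unique.
  unfold ft, model, f0. auto_derive.
  - repeat split; exists (cutoff' d y); apply cutoff_derive, Hd.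
  - replace (Derive (fun z : R => cutoff d z) y) with (cutoff' d y)
      by (symmetry; apply is_derive_unique, cutoff_derive, Hd).
    field.
Qed.

(** * The family for a fixed delta *)

Section Family.

Variable d : R.
Hypothesis Hd : 0 < d <= / 10.

Lemma weight_range t x : d <= weight d t x <= / 4.
Proof.
  unfold weight. pose proof (onset_range t). pose proof (plateau_range x).
  assert (0 <= onset t * plateau x <= 1) by (split; nra).
  split; nra.
Qed.

Lemma weight_depth_bump_bound t x : -1 <= t <= 1 -> 0 <= weight d t x * (depth t * bump x) <= 2 * d.
Proof.
  intros Ht.
  pose proof (weight_range t x). pose proof (depth_range t Ht). pose proof (bump_range x).
  destruct (Req_dec (depth t * bump x) 0) as [E|E]; [rewrite E; lra|].
  assert (0 <= depth t * bump x <= 2) by (split; nra).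
  destruct (depth_bump_support t x E). rewrite weight_inner by lra. split; nra.
Qed.

Lemma cutoff_range y : 0 <= cutoff d y <= 1.
Proof.
  unfold cutoff. pose proof (step_range ((1 + 2 * d - y) / d)).
  pose proof (step_range ((1 + 2 * d + y) / d)). split; nra.
Qed.

Lemma cutoff_inner y : Rabs y <= 1 + d -> cutoff d y = 1.
Proof.
  intros Hy. apply Rabs_le_between in Hy. unfold cutoff.
  rewrite !step_ge1; [ring| |]; apply (Rmult_le_reg_l d); try lra; field_simplify; lra.
Qed.

Lemma cutoff_outer y : 1 + 2 * d <= Rabs y -> cutoff d y = 0.
Proof.
  intros Hy. unfold cutoff. destruct (Rle_dec 0 y).
  - rewrite Rabs_pos_eq in Hy by lra. rewrite (step_nonpos ((1 + 2 * d - y) / d)); [ring|].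
    apply (Rmult_le_reg_l d); [lra|]. field_simplify; lra.
  - rewrite Rabs_left in Hy by lra. rewrite (step_nonpos ((1 + 2 * d + y) / d)); [ring|].
    apply (Rmult_le_reg_l d); [lra|]. field_simplify; lra.
Qed.

Lemma ft_inner t x y : Rabs y <= 1 + d -> ft d t x y = model d t x y.
Proof. intros Hy. unfold ft. rewrite cutoff_inner by auto. ring. Qed.

Lemma ft_initial x y : ft d (-1) x y = f0 x y.
Proof.
  unfold ft, model, level, weight, depth, onset, f0.
  rewrite !step_nonpos by lra. ring.
Qed.

Lemma ft_outside t x y : ~ in_box (1 + 2 * d) x y -> ft d t x y = f0 x y.
Proof.
  intros Hout. unfold ft.
  destruct (Rle_dec (1 + 2 * d) (Rabs y)) as [Hy|Hy].
  - rewrite cutoff_outer by auto. ring.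
  - assert (Hx : 1 <= Rabs x).
    { destruct (Rle_dec 1 (Rabs x)); auto. exfalso. apply Hout.
      split; apply Rabs_le_between; lra. }
    unfold model, weight, f0. rewrite plateau_far, level_far by lra. ring.
Qed.

Lemma ft_pos t x y : -1 <= t <= 1 -> 1 < Rabs y -> 0 < ft d t x y.
Proof.
  intros Ht Hy.
  assert (Hy2 : 1 < y ^ 2) by (rewrite <- pow2_abs; nra).
  pose proof (cutoff_range y). pose proof (weight_range t x). pose proof (level_le1 t x Ht).
  assert (0 < model d t x y) by (unfold model; apply Rmult_lt_0_compat; lra).
  assert (0 < f0 x y) by (unfold f0; lra).
  unfold ft. nra.
Qed.

Lemma ft_zero_iff t x y : -1 <= t <= 1 -> (ft d t x y = 0 <-> y ^ 2 = level t x).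
Proof.
  intros Ht. pose proof (weight_range t x). pose proof (level_le1 t x Ht).
  destruct (Rle_dec (Rabs y) 1) as [Hy|Hy].
  - rewrite ft_inner by lra. unfold model. split; intros E.
    + apply Rmult_integral in E. destruct E; lra.
    + rewrite E. ring.
  - pose proof (ft_pos t x y Ht ltac:(lra)).
    assert (1 < y ^ 2) by (rewrite <- pow2_abs; nra).
    split; intros; lra.
Qed.

Lemma zero_set_iff t x y : -1 <= t <= 1 ->
  (zero_set (ft d t) (x, y) <-> -2 <= x <= 2 /\ y ^ 2 = level t x).
Proof.
  intros Ht. unfold zero_set, in_box. cbn [fst snd]. rewrite ft_zero_iff by auto.
  pose proof (level_le1 t x Ht).
  split; [tauto|]. intros [Hx Hy].
  assert (Habs : Rabs y <= 1) by (rewrite <- pow2_abs in Hy; pose proof (Rabs_pos y); nra).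
  apply Rabs_le_between in Habs. repeat split; lra.
Qed.

Lemma ft_dx3_inner t x y : Rabs y < 1 + d -> dx3 (ft d t) x y = 2 * y * weight d t x.
Proof.
  intros Hy. rewrite ft_dx3, cutoff'_zero, cutoff_inner by lra. ring.
Qed.

Lemma ft_dx1_axis t x : - / 2 <= t -> Rabs x < / 2 ->
  dx1 (ft d t) x 0 = d * depth t * bump' x.
Proof.
  intros Ht Hx.
  rewrite ft_dx1, plateau'_inner, cutoff_inner, weight_inner by (rewrite ?Rabs_R0; lra).
  ring.
Qed.

Lemma order_one_off_axis t x y : Rabs y < 1 + d -> y <> 0 -> order_one_at (ft d t) (x, y).
Proof.
  intros Hy Hy0 E. unfold order_one_at in E. cbn [fst snd] in E.
  injection E as _ E3. rewrite ft_dx3_inner in E3 by auto.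
  pose proof (weight_range t x).
  apply Rmult_integral in E3 as [E3|E3]; [apply Rmult_integral in E3 as [E3|E3]|]; lra.
Qed.

Lemma zero_off_axis_order_one t x y : -1 <= t <= 1 -> zero_set (ft d t) (x, y) -> y <> 0 ->
  order_one_at (ft d t) (x, y).
Proof.
  intros Ht Hz Hy0. apply (zero_set_iff t x y Ht) in Hz as [_ Hy].
  apply order_one_off_axis; auto.
  pose proof (level_le1 t x Ht). rewrite <- pow2_abs in Hy. pose proof (Rabs_pos y). nra.
Qed.

Lemma model_minus_f0_transition t x y : -1 <= t <= 1 -> 1 + d <= Rabs y <= 1 + 2 * d ->
  Rabs (model d t x y - f0 x y) <= 4 * d.
Proof.
  intros Ht Hy.
  pose proof (weight_range t x). pose proof (weight_depth_bump_bound t x Ht).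
  assert (Y : 0 <= y ^ 2 - 1 <= 5 * d) by (rewrite <- pow2_abs; split; nra).
  assert (0 <= (/ 4 - weight d t x) * (y ^ 2 - 1) <= / 4 * (5 * d)) by (split; nra).
  apply Rabs_le_between. unfold model, level, f0. nra.
Qed.

Section Bounds.

Variable K : R.
Hypothesis HK : forall x, Rabs (Derive step x) <= K.

Lemma plateau'_bound x : Rabs (plateau' x) <= 4 * K.
Proof.
  unfold plateau', Rminus. replace (4 * K) with (2 * K * 1 + 2 * 1 * K) by ring.
  apply Rabs_plus_le; [|rewrite Rabs_Ropp]; repeat apply Rabs_mult_le; auto;
    try (apply Rabs_unit, step_range); rewrite Rabs_pos_eq; lra.
Qed.

Lemma bump'_bound x : Rabs (bump' x) <= 4 * K.
Proof.
  unfold bump'. replace (4 * K) with (4 * K * 1) by ring.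
  apply Rabs_mult_le; [apply Rabs_mult_le; [rewrite Rabs_pos_eq; lra|apply HK]|].
  pose proof (step_range (/ 2 + x)). unfold ramp. apply Rabs_le_between; lra.
Qed.

Lemma cutoff'_bound y : Rabs (cutoff' d y) <= 2 * K / d.
Proof.
  assert (Hinv : Rabs (/ d) = / d) by (apply Rabs_pos_eq, Rlt_le, Rinv_0_lt_compat; lra).
  unfold cutoff'. replace (2 * K / d) with (/ d * K * 1 + 1 * (/ d * K)) by (field; lra).
  apply Rabs_plus_le; repeat apply Rabs_mult_le; auto;
    try (apply Rabs_unit, step_range); rewrite ?Rabs_Ropp; lra.
Qed.

Lemma ft_bound t x y : -1 <= t <= 1 -> in_box 2 x y -> Rabs (ft d t x y) <= 2 + 8 * K.
Proof.
  intros Ht [Hx Hy].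
  pose proof (HK 0). pose proof (Rabs_pos (Derive step 0)).
  pose proof (cutoff_range y). pose proof (weight_range t x).
  pose proof (level_le1 t x Ht). pose proof (depth_range t Ht). pose proof (bump_range x).
  assert (0 <= depth t * bump x <= 2) by (split; nra).
  assert (Rabs (model d t x y) <= / 4 * 5).
  { unfold model. apply Rabs_mult_le; [rewrite Rabs_pos_eq; lra|].
    unfold level. apply Rabs_le_between. split; nra. }
  assert (Rabs (f0 x y) <= / 4 * 3) by (unfold f0; apply Rabs_le_between; split; nra).
  unfold ft. eapply Rle_trans.
  - apply Rabs_plus_le; apply Rabs_mult_le; eauto; rewrite Rabs_pos_eq; apply Rle_refl || lra.
  - nra.
Qed.

Lemma ft_dx1_bound t x y : -1 <= t <= 1 -> in_box 2 x y -> Rabs (dx1 (ft d t) x y) <= 2 + 8 * K.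
Proof.
  intros Ht [Hx Hy].
  pose proof (HK 0). pose proof (Rabs_pos (Derive step 0)).
  pose proof (cutoff_range y). pose proof (weight_range t x).
  pose proof (level_le1 t x Ht). pose proof (depth_range t Ht). pose proof (bump_range x).
  assert (Hlev : -1 <= level t x) by (unfold level; nra).
  rewrite ft_dx1. eapply Rle_trans.
  - apply Rabs_mult_le; [apply Rabs_unit; eauto|].
    apply Rabs_plus_le.
    + apply Rabs_mult_le; [apply Rabs_mult_le; [apply Rabs_mult_le|]|].
      * rewrite Rabs_Ropp, Rabs_pos_eq by lra. apply (Rle_refl (/ 4 - d)).
      * apply Rabs_unit, onset_range.
      * apply plateau'_bound.
      * apply (Rabs_le_between _ 5). split; nra.
    + apply Rabs_mult_le; [apply Rabs_mult_le|].
      * rewrite Rabs_pos_eq by lra. apply (Rle_refl (weight d t x)).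
      * rewrite Rabs_pos_eq by lra. apply (Rle_refl (depth t)).
      * apply bump'_bound.
  - assert (0 <= weight d t x * depth t <= / 2) by (split; nra).
    assert (0 <= K) by lra. nra.
Qed.

Lemma ft_dx3_bound t x y : -1 <= t <= 1 -> in_box 2 x y -> Rabs (dx3 (ft d t) x y) <= 2 + 8 * K.
Proof.
  intros Ht [Hx Hy].
  pose proof (HK 0). pose proof (Rabs_pos (Derive step 0)).
  pose proof (cutoff_range y). pose proof (weight_range t x).
  assert (Htransition : Rabs (cutoff' d y * (model d t x y - f0 x y)) <= 8 * K).
  { destruct (Rlt_dec (Rabs y) (1 + d)) as [Hy1|Hy1];
      [|destruct (Rlt_dec (1 + 2 * d) (Rabs y)) as [Hy2|Hy2]].
    1,2: rewrite cutoff'_zero, Rmult_0_l, Rabs_R0 by lra; lra.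
    replace (8 * K) with (2 * K / d * (4 * d)) by (field; lra).
    apply Rabs_mult_le; [apply cutoff'_bound|apply model_minus_f0_transition; lra]. }
  assert (Hslope : Rabs (cutoff d y * (2 * y * weight d t x) + (1 - cutoff d y) * (y / 2)) <= 1).
  { replace 1 with (cutoff d y * 1 + (1 - cutoff d y) * 1) at 2 by ring.
    apply Rabs_plus_le; apply Rabs_mult_le; try (rewrite Rabs_pos_eq; lra);
      apply Rabs_le_between; split; nra. }
  rewrite ft_dx3, Rplus_assoc by lra.
  eapply Rle_trans; [apply Rabs_plus_le; eauto|lra].
Qed.

End Bounds.

Lemma zero_set_negative_time t : -1 <= t < 0 ->
  two_disjoint_arcs (zero_set (ft d t)) (-2, 1) (2, 1) (-2, -1) (2, -1).
Proof.
  intros Ht.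
  assert (Hcont : forall x, continuous (fun x => sqrt (level t x)) x)
    by (intros x; apply continuous_sqrt_comp, level_continuous).
  exists (graph_arc (fun x => sqrt (level t x))), (graph_arc (fun x => - sqrt (level t x))).
  split; [apply graph_arc_is_arc, Hcont|].
  split; [apply graph_arc_is_arc; intros x;
          apply (continuous_opp (fun x => sqrt (level t x))), Hcont|].
  rewrite !graph_arc_0, !graph_arc_1, level_m2, level_2, sqrt_1.
  do 4 (split; [reflexivity|]). split.
  - intros [x y] [H1 H2]. apply on_graph_arc in H1 as [_ ->]. apply on_graph_arc in H2 as [_ E].
    pose proof (sqrt_lt_R0 _ (level_pos_negative_time t x Ht)). lra.
  - intros [x y]. rewrite zero_set_iff, !on_graph_arc by lra.
    pose proof (level_pos_negative_time t x Ht).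
    rewrite <- (pow2_sqrt (level t x)) at 1 by lra. rewrite pow2_eq_iff. tauto.
Qed.

Lemma order_one_negative_time t : -1 <= t < 0 ->
  forall p, zero_set (ft d t) p -> order_one_at (ft d t) p.
Proof.
  intros Ht [x y] Hz. apply zero_off_axis_order_one; auto; [lra|].
  intros ->. apply zero_set_iff in Hz as [_ Hy]; [|lra].
  pose proof (level_pos_negative_time t x Ht). replace (0 ^ 2) with 0 in Hy by ring. lra.
Qed.

Lemma zero_time_letter_X :
  letter_X (zero_set (ft d 0)) (-2, 1) (2, -1) (-2, -1) (2, 1) (0, 0).
Proof.
  set (D := Derive step (/ 2 + 0)).
  assert (HD : 0 < D) by (apply step_derive_pos; lra).
  assert (Hmid : -2 + 4 * / 2 = 0) by field.
  assert (D1 : is_derive cross_branch (-2 + 4 * / 2) (-2 * D))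
    by (rewrite Hmid; apply cross_branch_derive).
  assert (D2 : is_derive (fun x : R => - cross_branch x) (-2 + 4 * / 2) (2 * D)).
  { rewrite Hmid. replace (2 * D) with (- (-2 * D)) by ring.
    apply (is_derive_opp cross_branch), cross_branch_derive. }
  destruct (graph_arc_derive _ _ _ D1) as [E1x [E1y [F1x F1y]]].
  destruct (graph_arc_derive _ _ _ D2) as [E2x [E2y [F2x F2y]]].
  assert (Hzero : cross_branch 0 = 0) by (apply cross_branch_eq0; reflexivity).
  exists (graph_arc cross_branch), (graph_arc (fun x => - cross_branch x)), (/ 2), (/ 2).
  split; [apply graph_arc_is_arc, cross_branch_continuous|].
  split; [apply graph_arc_is_arc; intros x;
          apply (continuous_opp cross_branch), cross_branch_continuous|].
  rewrite !graph_arc_0, !graph_arc_1, !graph_arc_half, Hzero, Ropp_0.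
  unfold cross_branch at 1 2 3 4. rewrite ramp_m2, ramp_2.
  do 4 (split; [f_equal; ring|]). do 2 (split; [lra|]). do 2 (split; [reflexivity|]).
  split.
  - intros [x y] H1 H2. apply on_graph_arc in H1 as [_ ->]. apply on_graph_arc in H2 as [_ E].
    assert (Hx : x = 0) by (apply cross_branch_eq0; lra).
    subst x. rewrite Hzero. reflexivity.
  - do 4 (split; [assumption|]). rewrite F1x, F1y, F2x, F2y. split; [nra|].
    intros [x y]. rewrite zero_set_iff, !on_graph_arc, level_zero_time, pow2_eq_iff by lra. tauto.
Qed.

Lemma zero_time_quadratic : quadratic_at (ft d 0) (0, 0).
Proof.
  unfold quadratic_at. cbn [fst snd].
  assert (Hweight : weight d 0 0 = d) by (apply weight_inner; rewrite ?Rabs_R0; lra).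
  split; [|split].
  - rewrite ft_dx1_axis by (rewrite ?Rabs_R0; lra).
    unfold bump'. rewrite ramp_zero. field.
  - rewrite ft_dx3_inner by (rewrite Rabs_R0; lra). ring.
  - intros [_ [_ [_ E]]]. revert E. unfold dx3 at 1.
    rewrite (Derive_ext_loc _ (fun y : R => 2 * y * d)).
    + replace (Derive (fun y : R => 2 * y * d) 0) with (2 * d)
        by (symmetry; apply is_derive_unique; auto_derive; [exact I|ring]).
      lra.
    + apply (locally_interval _ 0 (- (1 + d)) (1 + d)); simpl; try lra.
      intros y Hy1 Hy2. rewrite ft_dx3_inner, Hweight; [reflexivity|].
      apply Rabs_lt_between; lra.
Qed.

Lemma zero_time_order_one p : zero_set (ft d 0) p -> p <> (0, 0) -> order_one_at (ft d 0) p.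
Proof.
  destruct p as [x y]. intros Hz Hp.
  apply zero_off_axis_order_one; auto; [lra|]. intros ->.
  apply zero_set_iff in Hz as [_ Hy]; [|lra].
  rewrite level_zero_time in Hy.
  assert (cross_branch x = 0) by nra.
  apply Hp. f_equal. apply cross_branch_eq0; auto.
Qed.

Lemma zero_set_positive_time t : 0 < t <= 1 ->
  two_disjoint_arcs (zero_set (ft d t)) (-2, 1) (-2, -1) (2, 1) (2, -1).
Proof.
  intros Ht. destruct (level_root t Ht) as [xL [HxL [HL0 [Hpos Hneg]]]].
  assert (Hgt : -2 < xL) by lra.
  assert (Hpos' : forall x, -2 <= x < xL -> 0 < level t x) by (intros x Hx; apply Hpos; lra).
  assert (Hon : forall x y, on_arc (folded_arc (level t) xL) (x, y) <->
                            -2 <= x <= xL /\ y ^ 2 = level t x)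
    by (intros; apply on_folded_arc; auto).
  exists (folded_arc (level t) xL), (mirror (folded_arc (level t) xL)).
  split; [apply folded_arc_is_arc; auto using level_continuous|].
  split; [apply mirror_is_arc, folded_arc_is_arc; auto using level_continuous|].
  split; [rewrite folded_arc_0, level_m2, sqrt_1; reflexivity|].
  split; [rewrite folded_arc_1, level_m2, sqrt_1; f_equal; ring|].
  split; [unfold mirror; rewrite folded_arc_0, level_m2, sqrt_1; simpl; f_equal; ring|].
  split; [unfold mirror; rewrite folded_arc_1, level_m2, sqrt_1; simpl; f_equal; ring|].
  split.
  - intros [x y] [H1 H2]. apply Hon in H1 as [H1 _].
    apply (on_mirror (folded_arc (level t) xL)), Hon in H2 as [H2 _]. lra.
  - intros [x y]. rewrite zero_set_iff, (on_mirror (folded_arc (level t) xL)), !Hon, level_opp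
      by lra.
    split; [|lra].
    intros [Hx Hy]. destruct (Rle_dec x xL); [left; lra|].
    destruct (Rle_dec (- xL) x); [right; lra|].
    pose proof (Hneg x ltac:(lra)). pose proof (pow2_ge_0 y). lra.
Qed.

Lemma order_one_positive_time t : 0 < t <= 1 ->
  forall p, zero_set (ft d t) p -> order_one_at (ft d t) p.
Proof.
  intros Ht [x y] Hz.
  destruct (Req_dec y 0) as [->|Hy0]; [|apply zero_off_axis_order_one; auto; lra].
  apply zero_set_iff in Hz as [_ Hlevel]; [|lra].
  replace (0 ^ 2) with 0 in Hlevel by ring.
  assert (Hx : Rabs x < / 2).
  { destruct (Rlt_dec (Rabs x) (/ 2)); auto. rewrite level_far in Hlevel by lra. lra. }
  assert (Hramp : ramp x <> / 2).
  { intros E. apply ramp_half_iff in E. subst x.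
    unfold level in Hlevel. rewrite bump_zero, depth_nonneg_time in Hlevel by lra. lra. }
  intros E. injection E as E _. rewrite ft_dx1_axis, depth_nonneg_time in E by lra.
  unfold bump' in E. apply Rabs_lt_between in Hx.
  pose proof (step_derive_pos (/ 2 + x) ltac:(lra)).
  assert (0 < d * (1 + t)) by nra.
  assert (1 - 2 * ramp x <> 0) by lra.
  repeat (apply Rmult_integral in E as [E|E]); lra.
Qed.

End Family.

Theorem mainTheorem8 :
  exists F : R -> R -> R -> R -> R,
    (* smooth family: smooth in (t, x1, x3) for each delta *)
    (forall delta, 0 < delta <= / 10 -> smooth3 (F delta)) /\
    (* (1) f_{-1}^delta = f *)
    (forall delta, 0 < delta <= / 10 ->
       forall x1 x3, in_box 2 x1 x3 -> F delta (-1) x1 x3 = f0 x1 x3) /\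
    (* (2) independent of t outside [-1-2delta,1+2delta]^2 *)
    (forall delta, 0 < delta <= / 10 ->
       forall t t' x1 x3, -1 <= t <= 1 -> -1 <= t' <= 1 ->
         in_box 2 x1 x3 -> ~ in_box (1 + 2 * delta) x1 x3 ->
         F delta t x1 x3 = F delta t' x1 x3) /\
    (* (3), t < 0: two arcs homotopic to {x3 = 1}, {x3 = -1}; order-1 vanishing *)
    (forall delta t, 0 < delta <= / 10 -> -1 <= t < 0 ->
       two_disjoint_arcs (zero_set (F delta t)) (-2, 1) (2, 1) (-2, -1) (2, -1) /\
       (forall p, zero_set (F delta t) p -> order_one_at (F delta t) p)) /\
    (* (3), t = 0: letter X, order-1 vanishing except quadratic at the crossing *)
    (forall delta, 0 < delta <= / 10 ->
       exists c : R * R,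
         letter_X (zero_set (F delta 0)) (-2, 1) (2, -1) (-2, -1) (2, 1) c /\
         quadratic_at (F delta 0) c /\
         (forall p, zero_set (F delta 0) p -> p <> c -> order_one_at (F delta 0) p)) /\
    (* (3), t > 0: two arcs connecting the endpoints the other way *)
    (forall delta t, 0 < delta <= / 10 -> 0 < t <= 1 ->
       two_disjoint_arcs (zero_set (F delta t)) (-2, 1) (-2, -1) (2, 1) (2, -1) /\
       (forall p, zero_set (F delta t) p -> order_one_at (F delta t) p)) /\
    (* (4) uniform C^1 bound *)
    (exists M : R, forall delta t x1 x3, 0 < delta <= / 10 -> -1 <= t <= 1 ->
       in_box 2 x1 x3 ->
       Rabs (F delta t x1 x3) <= M /\
       Rabs (dx1 (F delta t) x1 x3) <= M /\
       Rabs (dx3 (F delta t) x1 x3) <= M).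
Proof.
  exists ft. split; [|split; [|split; [|split; [|split; [|split]]]]].
  - intros d _. apply ft_smooth.
  - intros d Hd x y _. apply ft_initial; auto.
  - intros d Hd t t' x y _ _ _ Hout. rewrite !ft_outside; auto.
  - intros d t Hd Ht. split; [apply zero_set_negative_time|apply order_one_negative_time]; auto.
  - intros d Hd. exists (0, 0).
    refine (conj _ (conj _ _));
      [apply zero_time_letter_X|apply zero_time_quadratic|apply zero_time_order_one]; auto.
  - intros d t Hd Ht. split; [apply zero_set_positive_time|apply order_one_positive_time]; auto.
  - destruct step_derive_bounded as [K HK]. exists (2 + 8 * K).
    intros d t x y Hd Ht Hbox.
    refine (conj _ (conj _ _)); [apply ft_bound|apply ft_dx1_bound|apply ft_dx3_bound]; auto.
Qed.
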